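(* Let $v\ge 2$ and $k\ge 3$ be integers with $v\not\equiv 2\pmod 4$. Then there exists an AOA$(1,k-1,k,v)$.
   Context: An orthogonal array OA$(t,k,v)$ (with $1\le t\le k$) is a $v^t\times k$ array with entries from a set $X$ of size $v$ such that, for every choice of $t$ of its columns, each $t$-tuple in $X^t$ appears exactly once as a row of the corresponding $v^t\times t$ subarray. For integers $1\le s\le t\le k$, an augmented orthogonal array AOA$(s,t,k,v)$ is a $v^t\times(k+1)$ array $A$ such that: (1) the first $k$ columns of $A$ form an OA$(t,k,v)$ on a symbol set $X$ of size $v$; (2) the last column of $A$ has entries from a set $Y$ of size $v^{t-s}$; (3) for any choice of $s$ of the first $k$ columns, these $s$ columns together with the last column contain every $(s+1)$-tuple of $X^s\times Y$ exactly once as a row. *)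

From mathcomp Require Import all_boot.
Set Implicit Arguments. Unset Strict Implicit. Unset Printing Implicit Defensive.

(* Symbol set X is 'I_v; an array with v^t rows and k columns is a function
   'I_(v^t) -> 'I_k -> 'I_v (row index, column index).  "Choosing t of the
   columns" is an injective map c : 'I_t -> 'I_k; the corresponding subarray
   row r is the tuple [ffun i => A r (c i)]. *)

Definition is_OA (t k v : nat) (A : 'I_(v ^ t) -> 'I_k -> 'I_v) : Prop :=
  forall c : 'I_t -> 'I_k, injective c ->
  forall x : {ffun 'I_t -> 'I_v},
    #|[set r : 'I_(v ^ t) | [ffun i => A r (c i)] == x]| = 1.

Definition is_AOA (s t k v : nat) (A : 'I_(v ^ t) -> 'I_k -> 'I_v)
    (L : 'I_(v ^ t) -> 'I_(v ^ (t - s))) : Prop :=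
  @is_OA t k v A /\
  forall c : 'I_s -> 'I_k, injective c ->
  forall (x : {ffun 'I_s -> 'I_v}) (y : 'I_(v ^ (t - s))),
    #|[set r : 'I_(v ^ t) | ([ffun i => A r (c i)] == x) && (L r == y)]| = 1.

Definition AOA_exists (s t k v : nat) : Prop :=
  exists (A : 'I_(v ^ t) -> 'I_k -> 'I_v) (L : 'I_(v ^ t) -> 'I_(v ^ (t - s))),
    @is_AOA s t k v A L.

From HB Require Import structures.
From mathcomp Require Import all_boot fingroup cyclic ssralg finalg zmodp finfield zify.
Set Implicit Arguments. Unset Strict Implicit. Unset Printing Implicit Defensive.
Import GRing.Theory FinRing.Theory.

(* Take an abelian group G of order v with a complete mapping s (s and y |-> y + s y
   both bijective).  Index the rows by x in G^(k-1); the first k columns are the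
   k-1 coordinates of x and their sum, which is an OA(k-1,k,v).  The last column is
   (x_i - sigma_i(x_(k-2)))_(i < k-2) with sigma_0 = s and sigma_i = (-1)^i for
   i > 0.  Any one column together with the last one determines x_(k-2), hence x:
   for the sum column because sum_i sigma_i + id is either s or id + s.
   Complete mappings exist on groups of odd order (s = id) and on fields with more
   than two elements (s = multiplication by c <> 0, -1), and products preserve them;
   v mod 4 <> 2 means v = 2^a * o with o odd and a <> 1. *)

Lemma card_fiber_inj (T1 T2 : finType) (f : T1 -> T2) :
  injective f -> #|T1| = #|T2| -> forall y, #|[set x | f x == y]| = 1.
Proof.
move=> f_inj card12 y.
have /codomP [x ->] : y \in codom f by apply: inj_card_onto; rewrite // card12.
rewrite (_ : [set _ | _] = [set x]) ?cards1 //.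
by apply/setP => x'; rewrite !inE (inj_eq f_inj).
Qed.

Lemma is_OA_inj t k v (A : 'I_(v ^ t) -> 'I_k -> 'I_v) :
  (forall c : 'I_t -> 'I_k, injective c ->
     injective (fun r => [ffun i => A r (c i)])) ->
  is_OA A.
Proof.
move=> A_inj c c_inj x.
apply: card_fiber_inj (A_inj c c_inj) _ x.
by rewrite card_ffun !card_ord.
Qed.

Lemma is_AOA_inj s t k v (A : 'I_(v ^ t) -> 'I_k -> 'I_v)
    (L : 'I_(v ^ t) -> 'I_(v ^ (t - s))) :
  s <= t -> is_OA A ->
  (forall c : 'I_s -> 'I_k, injective c ->
     injective (fun r => ([ffun i => A r (c i)], L r))) ->
  @is_AOA s t k v A L.
Proof.
move=> le_st A_OA AL_inj; split=> // c c_inj x y.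
rewrite (_ : [set _ | _] = [set r | ([ffun i => A r (c i)], L r) == (x, y)]).
  apply: card_fiber_inj (AL_inj c c_inj) _ (x, y).
  by rewrite card_prod card_ffun !card_ord -expnD subnKC.
by apply/setP => r; rewrite !inE.
Qed.

Definition finzmod_prod (A B : finZmodType) := (A * B)%type.
HB.instance Definition _ (A B : finZmodType) := GRing.Zmodule.on (finzmod_prod A B).
HB.instance Definition _ (A B : finZmodType) := Finite.on (finzmod_prod A B).

Section CompleteMappings.

Local Open Scope ring_scope.

Definition complete_mapping (G : zmodType) (s : G -> G) :=
  injective s /\ injective (fun y => y + s y).

Definition has_complete_mapping (v : nat) :=
  exists (G : finZmodType) (s : G -> G), #|G| = v /\ complete_mapping s.

Lemma mulrn_card (G : finZmodType) (y : G) : y *+ #|G| = 0.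
Proof. by rewrite -zmodXgE -cardsT expg_cardG ?inE. Qed.

Lemma complete_mapping_id (G : finZmodType) :
  odd #|G| -> complete_mapping (@id G).
Proof.
move=> oddG; split=> // y z /= /eqP.
rewrite -subr_eq0 opprD addrACA -mulr2n => /eqP yz2.
apply/eqP; rewrite -subr_eq0; apply/eqP.
have := mulrn_card (y - z : G).
by rewrite -(odd_double_half #|G|) oddG mulrnDr -mul2n mulrnA yz2 mul0rn addr0.
Qed.

Lemma complete_mapping_scale (F : fieldType) (c : F) :
  c != 0 -> c != -1 -> complete_mapping ( *%R c).
Proof.
move=> c0 cN1; split; first exact: mulfI.
have c1 : 1 + c != 0 by rewrite addrC addr_eq0.
have sD y : y + c * y = (1 + c) * y by rewrite mulrDl mul1r.
by move=> y z /=; rewrite !sD => /(mulfI c1).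
Qed.

Lemma has_complete_mapping_finField (F : finFieldType) :
  (2 < #|F|)%N -> has_complete_mapping #|F|.
Proof.
move=> F_gt2.
pose S : {set F} := [set 0; -1].
have : (0 < #|~: S|)%N.
  rewrite -(leq_add2l #|S|) cardsC cards2 addn1.
  by case: (_ != _); last exact: ltnW.
case/card_gt0P => c; rewrite !inE negb_or => /andP [c0 cN1].
by exists F, ( *%R c); split; last exact: complete_mapping_scale.
Qed.

Lemma complete_mapping_prod (G1 G2 : finZmodType) (s1 : G1 -> G1) (s2 : G2 -> G2) :
  complete_mapping s1 -> complete_mapping s2 ->
  complete_mapping (fun p : finzmod_prod G1 G2 => (s1 p.1, s2 p.2)).
Proof.
move=> [s1_inj s1D_inj] [s2_inj s2D_inj].
split=> -[y1 y2] [z1 z2]; first by case=> /s1_inj -> /s2_inj ->.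
by case=> /s1D_inj -> /s2D_inj ->.
Qed.

End CompleteMappings.

Lemma has_complete_mapping_odd n : odd n -> has_complete_mapping n.
Proof.
case: n => // n odd_n; exists 'I_n.+1, id.
by split; [rewrite card_ord | apply: complete_mapping_id; rewrite card_ord].
Qed.

Lemma has_complete_mapping_mul v1 v2 :
  has_complete_mapping v1 -> has_complete_mapping v2 ->
  has_complete_mapping (v1 * v2).
Proof.
move=> [G1 [s1 [<- s1_cm]]] [G2 [s2 [<- s2_cm]]].
exists (finzmod_prod G1 G2), (fun p => (s1 p.1, s2 p.2)).
by split; [rewrite card_prod | apply: complete_mapping_prod].
Qed.

Lemma has_complete_mapping_pow2 a : a != 1 -> has_complete_mapping (2 ^ a).
Proof.
case: a => [|[|a]] // _; first exact: has_complete_mapping_odd.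
have [F _ cardF] := pPrimePowerField (isT : prime 2) (isT : 0 < a.+2).
rewrite -cardF; apply: has_complete_mapping_finField.
by rewrite cardF !expnS; have := expn_gt0 2 a; lia.
Qed.

Lemma has_complete_mapping_mod4 v :
  0 < v -> v %% 4 != 2 -> has_complete_mapping v.
Proof.
move=> v_gt0 v_mod4.
have [o o_odd def_v] := pfactor_coprime (isT : prime 2) v_gt0.
rewrite coprime2n in o_odd.
rewrite def_v; apply: has_complete_mapping_mul; first exact: has_complete_mapping_odd.
apply: has_complete_mapping_pow2; apply: contra v_mod4 => /eqP a1.
have : o %% 2 = 1 by rewrite modn2 o_odd.
by rewrite def_v a1 expn1; lia.
Qed.

Lemma codom_inj_hit n (c : 'I_n -> 'I_n.+1) (j1 j2 : 'I_n.+1) :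
  injective c -> j1 != j2 -> (j1 \in codom c) || (j2 \in codom c).
Proof.
move=> c_inj j12; apply: contraT; rewrite negb_or => /andP [j1c j2c].
have : codom c \subset ~: [set j1; j2].
  apply/subsetP => j jc; rewrite !inE; apply/norP.
  by split; apply/eqP => ej; [move: j1c | move: j2c]; rewrite -ej jc.
move/subset_leq_card; rewrite card_codom // card_ord.
by have := cardsC [set j1; j2]; rewrite cards2 j12 card_ord; lia.
Qed.

Section ParityCode.

Local Open Scope ring_scope.

Variables (G : zmodType) (n : nat).

Definition parity_col (j : 'I_n.+1) (x : {ffun 'I_n -> G}) : G :=
  if unlift ord_max j is Some i then x i else \sum_i x i.

Lemma parity_col_lift i x : parity_col (lift ord_max i) x = x i.
Proof. by rewrite /parity_col liftK. Qed.

Lemma parity_col_max x : parity_col ord_max x = \sum_i x i.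
Proof. by rewrite /parity_col unlift_none. Qed.

Lemma parity_cols_inj (c : 'I_n -> 'I_n.+1) :
  injective c -> injective (fun x => [ffun i => parity_col (c i) x]).
Proof.
move=> c_inj x1 x2 /ffunP /= eq_cols.
have eq_col j : j \in codom c -> parity_col j x1 = parity_col j x2.
  by case/codomP => i ->; have := eq_cols i; rewrite !ffunE.
apply/ffunP => i0; have [/eq_col|i0_miss] := boolP (lift ord_max i0 \in codom c).
  by rewrite !parity_col_lift.
have eq_other i : i != i0 -> x1 i = x2 i.
  move=> ii0; have := codom_inj_hit c_inj (_ : lift ord_max i != lift ord_max i0).
  rewrite (inj_eq (@lift_inj _ _)) (negbTE i0_miss) orbF => /(_ ii0) /eq_col.
  by rewrite !parity_col_lift.
have := codom_inj_hit c_inj (neq_lift ord_max i0).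
rewrite (negbTE i0_miss) orbF => /eq_col; rewrite !parity_col_max.
rewrite (bigD1 i0) // [in RHS](bigD1 i0) //= (eq_bigr _ (fun i ii0 => eq_other i ii0)).
exact: addIr.
Qed.

End ParityCode.

Section AugmentedColumn.

Local Open Scope ring_scope.

Variables (G : zmodType) (s : G -> G) (m : nat).
Hypothesis s_cm : complete_mapping s.

Definition twist (i : 'I_m.+1) (y : G) : G :=
  if i == ord0 then s y else if odd i then - y else y.

Definition aug_label (x : {ffun 'I_m.+2 -> G}) : {ffun 'I_m.+1 -> G} :=
  [ffun i => x (lift ord_max i) - twist i (x ord_max)].

Lemma twist_inj i : injective (twist i).
Proof.
rewrite /twist; case: (i == ord0); first by case: s_cm.
by case: (odd i); [exact: oppr_inj | exact: inj_id].
Qed.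

Lemma sum_alternating (y : G) k :
  \sum_(i < k) (if odd i then - y else y) = if odd k then y else 0.
Proof.
elim: k => [|k IHk]; first by rewrite big_ord0.
by rewrite big_ord_recr /= IHk; case: (odd k); rewrite /= ?subrr ?add0r.
Qed.

(* The alternating signs cancel up to at most one copy of [- y]. *)
Lemma sum_twist (y : G) :
  \sum_i twist i y + y = if odd m then s y else y + s y.
Proof.
rewrite big_ord_recl /twist eqxx.
rewrite (eq_bigr (fun i : 'I_m => - (if odd i then - y else y))); last first.
  by move=> i _ /=; rewrite add0n; case: (odd i); rewrite /= ?opprK.
rewrite (@sumrN G) sum_alternating.
by case: (odd m); rewrite ?subrK // subr0 addrC.
Qed.

Lemma sum_twist_inj : injective (fun y => \sum_i twist i y + y).
Proof.
case: s_cm => s_inj sD_inj y z /=; rewrite !sum_twist.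
by case: (odd m); [apply: s_inj | apply: sD_inj].
Qed.

Lemma sum_aug_label (x : {ffun 'I_m.+2 -> G}) :
  \sum_i x i = \sum_i aug_label x i + (\sum_i twist i (x ord_max) + x ord_max).
Proof.
rewrite big_ord_recr addrA -big_split /=; congr (_ + _); apply: eq_bigr => i _.
by rewrite ffunE subrK; congr (x _); apply/val_inj/esym/lift_max.
Qed.

Lemma aug_label_inj (j : 'I_m.+3) :
  injective (fun x => (parity_col j x, aug_label x)).
Proof.
move=> x1 x2 [eq_col eq_lab].
have eq_lab_at (i : 'I_m.+1) : x1 (lift ord_max i) - twist i (x1 ord_max)
                              = x2 (lift ord_max i) - twist i (x2 ord_max).
  by move/ffunP/(_ i): eq_lab; rewrite !ffunE.
suff eq_last : x1 ord_max = x2 ord_max.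
  apply/ffunP => i; case: (unliftP ord_max i) => [i' ->|->] //.
  by move: (eq_lab_at i'); rewrite eq_last => /addIr.
move: eq_col; case: (unliftP ord_max j) => [i ->|->].
  rewrite !parity_col_lift; case: (unliftP ord_max i) => [i' ->|->] // eq_i.
  by move: (eq_lab_at i'); rewrite eq_i => /addrI /oppr_inj /twist_inj.
by rewrite !parity_col_max !sum_aug_label eq_lab => /addrI /sum_twist_inj.
Qed.

End AugmentedColumn.

Lemma AOA_exists_complete_mapping (G : finZmodType) (s : G -> G) m :
  complete_mapping s -> AOA_exists 1 m.+2 m.+3 #|G|.
Proof.
move=> s_cm.
have cardX : #|{ffun 'I_m.+2 -> G}| = #|G| ^ m.+2 by rewrite card_ffun card_ord.
have cardY : #|{ffun 'I_m.+1 -> G}| = #|G| ^ (m.+2 - 1) by rewrite card_ffun card_ord.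
pose row r : {ffun 'I_m.+2 -> G} := enum_val (cast_ord (esym cardX) r).
have row_inj : injective row by move=> r1 r2 /enum_val_inj /cast_ord_inj.
pose A r j := enum_rank (parity_col j (row r)).
pose L r := cast_ord cardY (enum_rank (aug_label s (row r))).
have A_OA : is_OA A.
  apply: is_OA_inj => c c_inj r1 r2 /ffunP eq_A.
  apply/row_inj/(parity_cols_inj c_inj)/ffunP => i.
  by move: (eq_A i); rewrite !ffunE => /enum_rank_inj.
exists A, L; apply: is_AOA_inj => // c _ r1 r2 [/ffunP eq_A eq_L].
apply/row_inj/(@aug_label_inj _ s m s_cm (c ord0)); congr pair.
  by move: (eq_A ord0); rewrite !ffunE => /enum_rank_inj.
by move/ord_inj/enum_rank_inj: eq_L.
Qed.

Theorem theorem2p3 (v k : nat) :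
  2 <= v -> 3 <= k -> v %% 4 != 2 -> AOA_exists 1 (k - 1) k v.
Proof.
move=> v_ge2 k_ge3 v_mod4.
have [G [s [<- s_cm]]] := has_complete_mapping_mod4 (ltnW v_ge2) v_mod4.
case: k k_ge3 => [|[|[|m]]] // _.
exact: AOA_exists_complete_mapping s_cm.
Qed.
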